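(* Let $M$ be the allocation output by the online greedy algorithm on an instance of Model 1 and let $N$ be an optimal offline allocation. For a day $d_i$, let $X_i$ be the set of Type 2 agents that $N$ allocates on day $d_i$ and $Y_i$ the set of agents that $M$ allocates on day $d_i$. Then there exists an injective map $f:X_i\to Y_i$ such that whenever $f(a_p)=a_q$, we have $\alpha_p\le\alpha_q$.
   Context: Model 1: finite sets of agents $A$, categories $C$ and days $D=\{d_1,\dots,d_T\}$; each agent is eligible for a subset of categories; daily supply $s_i$ for day $d_i$; daily quota $q_{ik}$ for category $c_k$ on day $d_i$; each agent $a_j$ has a priority factor $\alpha_j>0$ and a set of available days; discount factor $\delta\in(0,1)$. An allocation maps each agent to a pair (eligible category, available day) or to $\emptyset$, with at most $q_{ik}$ agents getting $(c_k,d_i)$ and at most $s_i$ agents getting day $d_i$; agent $a_j$ allocated on day $d_i$ has utility $\alpha_j\delta^{i-1}$, and an optimal offline allocation maximizes total utility. The online greedy algorithm: on each day $d_i$, let $A_i$ be the agents available on $d_i$ not yet allocated; form the bipartite graph between $A_i$ and $C$ with an edge $(a_j,c_k)$ when $a_j$ is eligible for $c_k$, of weight $\alpha_j\delta^{i-1}$, agents of capacity $1$ and $c_k$ of capacity $q_{ik}$; compute a maximum-weight $b$-matching of size at most $s_i$ and allocate accordingly on day $d_i$. An agent allocated by $N$ is of Type 1 if $M$ allocates it on a strictly earlier day than $N$ does; every other agent allocated by $N$ is of Type 2. *)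

From HB Require Import structures.
From mathcomp Require Import all_boot all_order all_algebra.
Set Implicit Arguments. Unset Strict Implicit. Unset Printing Implicit Defensive.
Import Order.TTheory GRing.Theory Num.Theory.
Local Open Scope ring_scope.

(* Model 1.  Days d_1..d_T are indexed by i : 'I_T (i = 0 is d_1), so an agent
   a_j allocated on day i gets utility alpha_j * delta^i (= alpha_j delta^{(i+1)-1}). *)
Section Model1.
Variables (R : realFieldType) (A C : finType) (T : nat).
Variable elig : A -> C -> bool.
Variable s : 'I_T -> nat.
Variable q : 'I_T -> C -> nat.
Variable avail : A -> 'I_T -> bool.
Variable alpha : A -> R.
Variable delta : R.

Definition allocation := {ffun A -> option (C * 'I_T)}.

Definition allocated_on (M : allocation) (a : A) (i : 'I_T) : bool :=
  if M a is Some (_, d) then d == i else false.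

Definition feasible (M : allocation) : Prop :=
  (forall a c d, M a = Some (c, d) -> elig a c && avail a d) /\
  (forall i c, #|[set a | M a == Some (c, i)]| <= q i c)%N /\
  (forall i, #|[set a | allocated_on M a i]| <= s i)%N.

Definition utility (M : allocation) : R :=
  \sum_(a : A) (if M a is Some (_, d) then alpha a * delta ^+ d else 0).

Definition optimal (N : allocation) : Prop :=
  feasible N /\ forall N' : allocation, feasible N' -> utility N' <= utility N.

Definition allocated_before (M : allocation) (a : A) (i : 'I_T) : bool :=
  [exists j : 'I_T, (j < i)%N && allocated_on M a j].

Definition remaining (M : allocation) (i : 'I_T) (a : A) : bool :=
  avail a i && ~~ allocated_before M a i.

(* A b-matching on day i between A_i and C, encoded as a partial map
   agents -> categories: agent capacity 1, category c capacity q i c,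
   total size at most s i, edges only for eligible pairs. *)
Definition day_feasible (M : allocation) (i : 'I_T) (g : A -> option C) : Prop :=
  (forall a c, g a = Some c -> remaining M i a && elig a c) /\
  (forall c, #|[set a | g a == Some c]| <= q i c)%N /\
  (#|[set a | g a != None]| <= s i)%N.

Definition day_weight (i : 'I_T) (g : A -> option C) : R :=
  \sum_(a : A) (if g a is Some _ then alpha a * delta ^+ i else 0).

Definition restrict (M : allocation) (i : 'I_T) (a : A) : option C :=
  if M a is Some (c, d) then (if d == i then Some c else None) else None.

(* M is an output of the online greedy algorithm: on every day i, the
   agents M allocates on day i form a maximum-weight b-matching of size at
   most s i among the remaining agents A_i. *)
Definition greedy_output (M : allocation) : Prop :=
  forall i : 'I_T,
    day_feasible M i (restrict M i) /\
    forall g : A -> option C, day_feasible M i g ->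
      day_weight i g <= day_weight i (restrict M i).

(* X_i: Type 2 agents that N allocates on day i (N allocates them on day i and
   M does not allocate them on a strictly earlier day). *)
Definition type2_on (M N : allocation) (i : 'I_T) : {set A} :=
  [set a | allocated_on N a i && ~~ allocated_before M a i].

Definition alloc_on (M : allocation) (i : 'I_T) : {set A} :=
  [set a | allocated_on M a i].

End Model1.

(* The b-matchings of one day (agents of capacity one, category quotas, a total
   size bound) satisfy the matroid augmentation axiom: a smaller one can be
   grown, by edges of a larger one, to at least the size of the larger one.
   So the greedy matching of M on day i, which has maximum weight for the
   positive weights alpha, contains for every threshold t at least as many
   agents of weight >= t as any other b-matching of that day: otherwise one
   could add a heavy agent x to its heavy part and re-augment from M's
   matching, dropping at most one agent of M, which is lighter than x, and
   thus increase the weight.  The Type 2 agents of N on day i form such a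
   b-matching, and domination at every threshold yields the injection by
   pairing heaviest with heaviest. *)

From mathcomp Require Import all_boot all_order all_algebra.
From mathcomp Require Import zify.
Set Implicit Arguments.
Unset Strict Implicit.
Unset Printing Implicit Defensive.

Import Order.TTheory GRing.Theory Num.Theory.
Local Open Scope ring_scope.

Lemma sum_lt_exchange (R : numDomainType) (A : finType) (w : A -> R)
    (S Y : {set A}) x :
  0 < w x -> x \in S -> x \notin Y -> S :\ x \subset Y -> (#|Y| <= #|S|)%N ->
  {in Y :\: S, forall y, w y < w x} ->
  \sum_(a in Y) w a < \sum_(a in S) w a.
Proof.
move=> wx_gt0 xS xY subY leYS lt_wx.
rewrite (big_setD1 x xS) (big_setID (A := Y) (S :\ x)) (setIidPr subY).
rewrite /= addrC ltrD2r.
have -> : Y :\: (S :\ x) = Y :\: S.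
  by apply/setP => a; rewrite !inE; case: (a =P x) => // ->; rewrite (negbTE xY) !andbF.
have : (#|Y :\: S| <= 1)%N.
  have := cardsID S Y; have := cardsD1 x S; rewrite xS.
  have : (#|S :\ x| <= #|Y :&: S|)%N.
    by apply: subset_leq_card; rewrite subsetI subY subD1set.
  lia.
have [-> _|[y yYS]] := set_0Vmem (Y :\: S); first by rewrite big_set0.
move/card_le1P => /(_ y yYS) YS1.
by rewrite (eq_bigl _ _ YS1) big_pred1_eq lt_wx.
Qed.

Section BMatching.
Variables (A C : finType) (edge : A -> C -> bool) (cap : C -> nat) (bound : nat).

Definition matched (g : A -> option C) : {set A} := [set a | g a != None].

Definition bmatching (g : A -> option C) : Prop :=
  (forall a c, g a = Some c -> edge a c) /\
  (forall c, #|[set a | g a == Some c]| <= cap c)%N /\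
  (#|matched g| <= bound)%N.

Definition submatching (P : pred A) (g : A -> option C) : A -> option C :=
  fun a => if P a then g a else None.

Lemma matched_sub P g : matched (submatching P g) = [set a in matched g | P a].
Proof. by apply/setP => a; rewrite !inE /submatching; case: (P a); rewrite ?andbT ?andbF. Qed.

Lemma bmatching_sub P g : bmatching g -> bmatching (submatching P g).
Proof.
rewrite /submatching; case=> [g_edge [g_cap g_bound]]; split; [|split].
- by move=> a c; case: (P a) => //; apply: g_edge.
- move=> c; apply: leq_trans (g_cap c); apply: subset_leq_card.
  by apply/subsetP => a; rewrite !inE; case: (P a).
- apply: leq_trans g_bound; apply: subset_leq_card.
  by apply/subsetP => a; rewrite !inE; case: (P a).
Qed.

Lemma card_matched g : #|matched g| = (\sum_c #|[set a | g a == Some c]|)%N.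
Proof.
rewrite /matched -sum1dep_card; under [RHS]eq_bigr do rewrite -sum1dep_card.
rewrite (exchange_big_dep (fun a => g a != None)) => [|c a _ /eqP-> //].
apply: eq_bigr => a; case: (g a) => [c0|] //= _.
by rewrite (big_pred1 c0) // => c; rewrite /= (inj_eq Some_inj) eq_sym.
Qed.

Lemma bmatching_exchange g1 g2 :
  bmatching g1 -> bmatching g2 -> (#|matched g1| < #|matched g2|)%N ->
  exists g, [/\ bmatching g, matched g1 \subset matched g,
    matched g \subset matched g1 :|: matched g2 &
    (#|[set a | g1 a == g2 a]| < #|[set a | g a == g2 a]|)%N].
Proof.
move=> [g1_edge [g1_cap g1_bound]] [g2_edge [g2_cap g2_bound]] lt12.
have [c lt_c] : exists c, (#|[set a | g1 a == Some c]| < #|[set a | g2 a == Some c]|)%N.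
  apply/existsP; apply: contraT; rewrite negb_exists => /forallP le21.
  move: lt12; rewrite !card_matched ltnNge (leq_sum) // => c _.
  by rewrite leqNgt le21.
have [j /andP[/eqP g2j g1j]] : exists j, (g2 j == Some c) && (g1 j != Some c).
  apply/existsP; apply: contraT; rewrite negb_exists => /forallP sub.
  move: lt_c; rewrite ltnNge subset_leq_card //; apply/subsetP => a; rewrite !inE => g2a.
  by have := sub a; rewrite g2a /= negbK.
pose g a := if a == j then Some c else g1 a.
have matched_g : matched g = j |: matched g1.
  by apply/setP => a; rewrite !inE /g; case: (a =P j).
have j2 : j \in matched g2 by rewrite inE g2j.
have card_setU1 (S : {set A}) : (#|j |: S| <= #|S|.+1)%N.
  by rewrite cardsU1 -add1n leq_add2r leq_b1.
exists g; split.
- split; [|split].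
  + by move=> a c'; rewrite /g; case: (a =P j) => [-> [<-]|_]; [apply: g2_edge | apply: g1_edge].
  + move=> c'; have [->|ne] := eqVneq c' c.
      apply: leq_trans (g2_cap c); apply: leq_trans lt_c; apply: leq_trans (card_setU1 _).
      by apply: subset_leq_card; apply/subsetP => a; rewrite !inE /g; case: (a =P j).
    apply: leq_trans (g1_cap c'); apply: subset_leq_card; apply/subsetP => a.
    by rewrite !inE /g; case: (a =P j) => // _; rewrite (inj_eq Some_inj) eq_sym (negbTE ne).
  + by rewrite matched_g; apply: leq_trans g2_bound; apply: leq_trans lt12.
- by rewrite matched_g subsetUr.
- by rewrite matched_g subUset sub1set inE j2 orbT subsetUl.
apply: proper_card; apply/properP; split.
  by apply/subsetP => a; rewrite !inE /g; case: (a =P j) => [->|//]; rewrite g2j (negbTE g1j).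
by exists j; rewrite !inE /g ?eqxx ?g2j // (negbTE g1j).
Qed.

Lemma bmatching_augment g1 g2 : bmatching g1 -> bmatching g2 ->
  exists g, [/\ bmatching g, matched g1 \subset matched g,
    matched g \subset matched g1 :|: matched g2 & (#|matched g2| <= #|matched g|)%N].
Proof.
move=> g1_bm g2_bm; have [n] := ubnP (#|A| - #|[set a | g1 a == g2 a]|).
elim: n => // n IH in g1 g1_bm *; rewrite ltnS => measure_g1.
have [le21|lt12] := leqP #|matched g2| #|matched g1|.
  by exists g1; split; rewrite ?subsetUl.
have [g [g_bm sub1 sub2 agree_lt]] := bmatching_exchange g1_bm g2_bm lt12.
have agree_le : (#|[set a | g a == g2 a]| <= #|A|)%N by apply: max_card.
have [g' [g'_bm sub1' sub2' le']] := IH g g_bm ltac:(lia).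
exists g'; split => //; first exact: subset_trans sub1 sub1'.
by apply: subset_trans sub2' _; rewrite subUset sub2 subsetUr.
Qed.

Lemma bmatching_augment1 g1 g2 : bmatching g1 -> bmatching g2 ->
  (#|matched g1| < #|matched g2|)%N ->
  exists2 x, x \in matched g2 :\: matched g1 &
    exists2 g, bmatching g & matched g = x |: matched g1.
Proof.
move=> g1_bm g2_bm lt12; have [g [g_bm sub1 sub2 le2]] := bmatching_augment g1_bm g2_bm.
have /properP[_ [x xg xg1]] : matched g1 \proper matched g.
  by rewrite properEcard sub1; apply: leq_trans le2.
exists x.
  rewrite in_setD xg1; move/subsetP: sub2 => /(_ x xg).
  by rewrite in_setU (negbTE xg1).
exists (submatching (mem (x |: matched g1)) g); first exact: bmatching_sub.
apply/setP => a; rewrite matched_sub inE; apply/andb_idl.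
by case/setU1P => [-> // | /(subsetP sub1)].
Qed.

Variables (R : realDomainType) (w : A -> R).
Hypothesis w_gt0 : forall a, 0 < w a.

Lemma max_weight_bmatching_dominates gM g (t : R) :
  bmatching gM ->
  (forall g', bmatching g' -> \sum_(a in matched g') w a <= \sum_(a in matched gM) w a) ->
  bmatching g ->
  (#|[set a in matched g | (t <= w a)%R]| <= #|[set a in matched gM | (t <= w a)%R]|)%N.
Proof.
move=> gM_bm gM_max g_bm; pose heavy := fun a => t <= w a.
rewrite -!(matched_sub heavy) leqNgt; apply/negP => lt_heavy.
have [x /setDP[xg xgM] [g4 g4_bm matched4]] :=
  bmatching_augment1 (bmatching_sub heavy gM_bm) (bmatching_sub heavy g_bm) lt_heavy.
have [g5 [g5_bm sub4 sub5 le5]] := bmatching_augment g4_bm gM_bm.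
have tx : t <= w x by move: xg; rewrite matched_sub inE => /andP[].
have xM : x \notin matched gM by move: xgM; rewrite matched_sub in_set /heavy tx andbT.
have heavy_sub : matched (submatching heavy gM) \subset matched gM.
  by rewrite matched_sub; apply/subsetP => a; rewrite in_set => /andP[].
have := gM_max g5 g5_bm; apply/negP; rewrite -ltNge.
apply: (sum_lt_exchange (w_gt0 x)) => //.
- by apply: (subsetP sub4); rewrite matched4 setU11.
- rewrite subDset; apply: subset_trans sub5 _.
  by rewrite matched4 -setUA setUS // subUset heavy_sub subxx.
move=> y /setDP[yM yg5]; apply: lt_le_trans tx; rewrite ltNge; apply: contra yg5 => ty.
by apply: (subsetP sub4); rewrite matched4 setU1r // matched_sub in_set yM.
Qed.
End BMatching.

Lemma threshold_domination_injection (disp : Order.disp_t) (R : orderType disp)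
    (A : finType) (w : A -> R) (X Y : {set A}) :
  (forall t, #|[set a in X | (t <= w a)%O]| <= #|[set a in Y | (t <= w a)%O]|)%N ->
  exists f : A -> A, {in X &, injective f} /\
    (forall a, a \in X -> f a \in Y /\ (w a <= w (f a))%O).
Proof.
have [n] := ubnP #|X|; elim: n => // n IH in X Y *; rewrite ltnS => leXn dom.
have [->|[x0 x0X]] := set_0Vmem X.
  by exists id; split=> [a b|a]; rewrite inE.
case: (@arg_maxP _ _ _ _ [in X] w x0X) => x xX x_max.
have [y0 y0Y] : exists y0, y0 \in [set a in Y | (w x <= w a)%O].
  apply/set0Pn; rewrite -card_gt0; apply: leq_trans (dom (w x)).
  by rewrite card_gt0; apply/set0Pn; exists x; rewrite inE lexx andbT.
move: y0Y; rewrite inE => /andP[y0Y le_x_y0].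
case: (@arg_maxP _ _ _ _ [in Y] w y0Y) => y yY y_max.
have le_xy : (w x <= w y)%O := le_trans le_x_y0 (y_max _ y0Y).
have card_threshD1 (Z : {set A}) z t : z \in Z -> (t <= w z)%O ->
    #|[set a in Z :\ z | (t <= w a)%O]|.+1 = #|[set a in Z | (t <= w a)%O]|.
  move=> zZ tz; rewrite (cardsD1 z [set a in Z | _]) inE zZ tz add1n; congr _.+1.
  by apply: eq_card => a; rewrite !inE andbA.
have [f [f_inj f_le]] : exists f : A -> A, {in X :\ x &, injective f} /\
    (forall a, a \in X :\ x -> f a \in Y :\ y /\ (w a <= w (f a))%O).
  apply: IH.
    by move: leXn; rewrite (cardsD1 x) xX.
  move=> t; have [tx|xt] := leP t (w x).
    rewrite -ltnS (card_threshD1 _ _ _ xX tx).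
    by rewrite (card_threshD1 _ _ _ yY (le_trans tx le_xy)) dom.
  suff -> : [set a in X :\ x | (t <= w a)%O] = set0 by rewrite cards0.
  apply/setP => a; rewrite !inE; apply/negbTE/andP => -[/andP[_ aX] ta].
  by have := lt_le_trans xt (le_trans ta (x_max _ aX)); rewrite ltxx.
have f_neq_y a : a \in X -> a != x -> f a != y.
  by move=> aX ax; have /f_le[/setD1P[]] : a \in X :\ x by rewrite in_setD1 ax.
exists (fun a => if a == x then y else f a); split.
  move=> a b aX bX /=; have [->|ax] := eqVneq a x; have [->|bx] := eqVneq b x => //.
  - by move=> y_fb; have := f_neq_y b bX bx; rewrite -y_fb eqxx.
  - by move=> fa_y; have := f_neq_y a aX ax; rewrite fa_y eqxx.
  - by apply: f_inj; rewrite in_setD1 ?ax ?bx.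
move=> a aX /=; have [->|ax] := eqVneq a x; first by [].
by have /f_le[/setD1P[]] : a \in X :\ x by rewrite in_setD1 ax.
Qed.

Section GreedyModel.
Variables (R : realFieldType) (A C : finType) (T : nat).
Variables (elig : A -> C -> bool) (s : 'I_T -> nat) (q : 'I_T -> C -> nat).
Variables (avail : A -> 'I_T -> bool) (alpha : A -> R) (delta : R).
Implicit Types (M N : allocation A C T) (i : 'I_T) (g : A -> option C).

Lemma restrict_eq_Some M i a c : (restrict M i a == Some c) = (M a == Some (c, i)).
Proof.
rewrite /restrict; case: (M a) => [[c' d]|] //.
have [->|ne] := eqVneq d i; rewrite !(inj_eq Some_inj) xpair_eqE ?eqxx ?andbT //.
by rewrite (negbTE ne) andbF.
Qed.

Lemma restrict_neq_None M i a : (restrict M i a != None) = allocated_on M a i.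
Proof. by rewrite /restrict /allocated_on; case: (M a) => [[c d]|] //; case: (d == i). Qed.

Lemma matched_restrict M i : matched (restrict M i) = alloc_on M i.
Proof. by apply/setP => a; rewrite !inE restrict_neq_None. Qed.

Definition type2_matching M N i : A -> option C :=
  submatching (fun a => ~~ allocated_before M a i) (restrict N i).

Lemma matched_type2_matching M N i : matched (type2_matching M N i) = type2_on M N i.
Proof. by rewrite matched_sub matched_restrict; apply/setP => a; rewrite !inE. Qed.

Lemma type2_matching_day_feasible M N i :
  feasible elig s q avail N -> day_feasible elig s q avail M i (type2_matching M N i).
Proof.
case=> [N_elig [N_quota N_supply]]; rewrite /type2_matching /submatching.
split; [|split].
- move=> a c; case: ifP => // fresh /eqP; rewrite restrict_eq_Some => /eqP /N_elig.
  by rewrite /remaining fresh => /andP[-> ->].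
- move=> c; apply: leq_trans (N_quota i c); apply: subset_leq_card.
  by apply/subsetP => a; rewrite !inE; case: ifP => // _; rewrite restrict_eq_Some.
- apply: leq_trans (N_supply i); apply: subset_leq_card.
  by apply/subsetP => a; rewrite !inE; case: ifP; rewrite ?restrict_neq_None.
Qed.

Lemma day_weightE i g :
  day_weight alpha delta i g = (\sum_(a in matched g) alpha a) * delta ^+ i.
Proof.
rewrite /day_weight mulr_suml [RHS]big_mkcond; apply: eq_bigr => a _.
by rewrite inE; case: (g a) => [c|] /=; rewrite ?mul0r.
Qed.

Lemma greedy_max_day_weight M i g :
  0 < delta -> greedy_output elig s q avail alpha delta M ->
  day_feasible elig s q avail M i g ->
  \sum_(a in matched g) alpha a <= \sum_(a in matched (restrict M i)) alpha a.
Proof.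
move=> delta_gt0 greedyM gF; have := (greedyM i).2 g gF.
by rewrite !day_weightE ler_pM2r // exprn_gt0.
Qed.

End GreedyModel.

Theorem lemma3 (R : realFieldType) (A C : finType) (T : nat)
  (elig : A -> C -> bool) (s : 'I_T -> nat) (q : 'I_T -> C -> nat)
  (avail : A -> 'I_T -> bool) (alpha : A -> R) (delta : R)
  (halpha : forall a, 0 < alpha a) (hdelta0 : 0 < delta) (hdelta1 : delta < 1)
  (M N : allocation A C T)
  (hM : greedy_output elig s q avail alpha delta M)
  (hN : optimal elig s q avail alpha delta N)
  (i : 'I_T) :
  exists f : A -> A,
    {in type2_on M N i &, injective f} /\
    (forall a, a \in type2_on M N i ->
       f a \in alloc_on M i /\ alpha a <= alpha (f a)).
Proof.
apply: threshold_domination_injection => t.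
rewrite -matched_type2_matching -matched_restrict.
apply: (max_weight_bmatching_dominates
          (edge := fun a c => remaining avail M i a && elig a c) halpha _ (hM i).1).
  by move=> g; apply: greedy_max_day_weight hdelta0 hM.
exact: type2_matching_day_feasible hN.1.
Qed.
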